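(* Consider the problem of minimizing $g(\mathbf{x})+f(\mathbf{x})+h(\mathbf{y})$ subject to $\mathbf{A}\mathbf{x}+\mathbf{B}\mathbf{y}=\mathbf{0}$ (the coupling function $g$ depends only on $\mathbf{x}$), under the standing assumptions (i)–(iv) below, and let $\{(\mathbf{x}^k,\mathbf{y}^k,\boldsymbol{\gamma}^k)\}$ be generated by the two-block linearized ADMM below with parameters satisfying $$L_x\ge L_g+\beta L_{\mathbf{A}}+6L_w^2+1,\quad L_y\ge L_w+L_w^2+3,\quad C_m=\tfrac{L_y+L_w^2}{2},\quad \beta\ge\max\left\{\frac{L_w+L_y+2}{\lambda_{\mathbf{B}^{\rm T}\mathbf{B}}},\frac{3(L_w^2+L_y^2)}{\lambda_{\mathbf{B}^{\rm T}\mathbf{B}}C_m},\frac{3L_y^2}{\lambda_{\mathbf{B}^{\rm T}\mathbf{B}}}\right\},$$ where $L_{\mathbf{A}}$ is the largest eigenvalue of $\mathbf{A}^{\rm T}\mathbf{A}$, $\lambda_{\mathbf{B}^{\rm T}\mathbf{B}}$ the smallest eigenvalue of $\mathbf{B}^{\rm T}\mathbf{B}$, $L_w=L_g+L_h$. Then the sequence $\{g(\mathbf{x}^k)+f(\mathbf{x}^k)+h(\mathbf{y}^k)\}$ is convergent.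
   Context: Variables $\mathbf{x}\in\mathbb{R}^p$, $\mathbf{y}\in\mathbb{R}^q$; $\mathbf{A}\in\mathbb{R}^{n\times p}$, $\mathbf{B}\in\mathbb{R}^{n\times q}$; $f$ possibly nonconvex nonsmooth. A function is $L$-Lipschitz differentiable if its gradient is $L$-Lipschitz. Standing assumptions: (i) $h$ is $L_h$-Lipschitz differentiable; (ii) $g$ is $L_g$-Lipschitz differentiable; (iii) $g(\mathbf{x})+f(\mathbf{x})+h(\mathbf{y})$ is lower bounded on the feasible set $\{(\mathbf{x},\mathbf{y}):\mathbf{A}\mathbf{x}+\mathbf{B}\mathbf{y}=\mathbf{0}\}$ and coercive with respect to $\mathbf{y}$ over it (objective $\to+\infty$ along any feasible sequence with $\|\mathbf{y}^k\|\to\infty$); (iv) $\mathbf{B}$ has full column rank and $\mathrm{Im}(\mathbf{A})\subset\mathrm{Im}(\mathbf{B})$. Algorithm (parameters $L_x,L_y,\beta>0$, arbitrary initialization): $\mathbf{x}^{k+1}\in\arg\min\bar f^k$, $\mathbf{y}^{k+1}=\arg\min\bar h^k$, $\boldsymbol{\gamma}^{k+1}=\boldsymbol{\gamma}^k+\beta(\mathbf{A}\mathbf{x}^{k+1}+\mathbf{B}\mathbf{y}^{k+1})$, with $\bar f^k(\mathbf{x})=f(\mathbf{x})+\langle\boldsymbol{\gamma}^k,\mathbf{A}\mathbf{x}\rangle+\frac{L_x}{2}\|\mathbf{x}-\mathbf{x}^k\|^2+\langle\mathbf{x}-\mathbf{x}^k,\nabla g(\mathbf{x}^k)+\beta\mathbf{A}^{\rm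 T}(\mathbf{A}\mathbf{x}^k+\mathbf{B}\mathbf{y}^k)\rangle$, $\bar h^k(\mathbf{y})=\langle\boldsymbol{\gamma}^k,\mathbf{B}\mathbf{y}\rangle+\frac{L_y}{2}\|\mathbf{y}-\mathbf{y}^k\|^2+\frac{\beta}{2}\|\mathbf{A}\mathbf{x}^{k+1}+\mathbf{B}\mathbf{y}\|^2+\langle\mathbf{y}-\mathbf{y}^k,\nabla h(\mathbf{y}^k)\rangle$ (minimizers of $\bar f^k$ assumed to exist). *)

From HB Require Import structures.
From mathcomp Require Import all_boot all_order all_algebra.
From mathcomp Require Import all_classical all_reals all_analysis.
Set Implicit Arguments. Unset Strict Implicit. Unset Printing Implicit Defensive.
Import Order.TTheory GRing.Theory Num.Theory.
Import numFieldNormedType.Exports.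
Local Open Scope ring_scope.

Definition dotc (R : realType) (m : nat) (u v : 'cV[R]_m) : R := (u^T *m v) 0 0.
Definition enorm (R : realType) (m : nat) (u : 'cV[R]_m) : R := Num.sqrt (dotc u u).

Definition is_gradient (R : realType) (m : nat) (g : 'cV[R]_m -> R)
  (G : 'cV[R]_m -> 'cV[R]_m) : Prop :=
  forall x, differentiable g x /\ forall v, 'd g x v = dotc (G x) v.

Definition lipschitz_differentiable (R : realType) (m : nat) (L : R)
  (g : 'cV[R]_m -> R) (G : 'cV[R]_m -> 'cV[R]_m) : Prop :=
  is_gradient g G /\ forall x y, enorm (G x - G y) <= L * enorm (x - y).

From HB Require Import structures.
From mathcomp Require Import all_boot all_order all_algebra.
From mathcomp Require Import all_classical all_reals all_analysis.
From mathcomp Require Import ring lra.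
Import Order.TTheory GRing.Theory Num.Theory.
Import numFieldNormedType.Exports.
Set Implicit Arguments. Unset Strict Implicit. Unset Printing Implicit Defensive.
Local Open Scope classical_set_scope.
Local Open Scope ring_scope.

(* The y-update is a strongly convex quadratic problem, and its
   optimality condition  B^T gamma^(k+1) = -(grad h(y^k) + Ly (y^(k+1) - y^k))  writes the dual
   increment through primal increments.  Since Im A is contained in Im B the residual
   r^k = A x^k + B y^k lies in Im B, so  beta lamB |r^(k+2)|^2  is bounded by the last two
   y-increments.  With the descent lemma for g and h, the function
   Psi_k = L_beta(x^(k+1), y^(k+1), gamma^(k+1)) + kappa |y^(k+1) - y^k|^2  then satisfies
   Psi_(k+1) + |y^(k+2) - y^(k+1)|^2 <= Psi_k.  Psi_k dominates the objective at the feasible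
   point (x^(k+1), -zeta^(k+1)), where A x = B zeta, so it is bounded below and converges.
   Hence increments and residuals vanish, coercivity bounds y^k, and the objective differs
   from Psi by vanishing terms.  The eigenvalue hypotheses enter through the
   Rayleigh-quotient characterisation of the extreme eigenvalues of a symmetric matrix. *)

Section InnerProduct.
Variables (R : realType) (m : nat).
Implicit Types (u v w : 'cV[R]_m) (t : R).

Lemma dotcE u v : dotc u v = \sum_i u i 0 * v i 0.
Proof. by rewrite /dotc !mxE; apply: eq_bigr => i _; rewrite !mxE. Qed.

Lemma dotcC u v : dotc u v = dotc v u.
Proof. by rewrite !dotcE; apply: eq_bigr => i _; rewrite mulrC. Qed.

Lemma dotcDl u v w : dotc (u + v) w = dotc u w + dotc v w.
Proof. by rewrite !dotcE -big_split; apply: eq_bigr => i _; rewrite !mxE mulrDl. Qed.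

Lemma dotcZl t u w : dotc (t *: u) w = t * dotc u w.
Proof. by rewrite !dotcE mulr_sumr; apply: eq_bigr => i _; rewrite !mxE mulrA. Qed.

Lemma dotcNl u w : dotc (- u) w = - dotc u w.
Proof. by rewrite -scaleN1r dotcZl mulN1r. Qed.

Lemma dotcBl u v w : dotc (u - v) w = dotc u w - dotc v w.
Proof. by rewrite dotcDl dotcNl. Qed.

Lemma dotcDr u v w : dotc w (u + v) = dotc w u + dotc w v.
Proof. by rewrite dotcC dotcDl !(dotcC w). Qed.

Lemma dotcZr t u w : dotc w (t *: u) = t * dotc w u.
Proof. by rewrite dotcC dotcZl dotcC. Qed.

Lemma dotcNr u w : dotc w (- u) = - dotc w u.
Proof. by rewrite dotcC dotcNl dotcC. Qed.

Lemma dotcBr u v w : dotc w (u - v) = dotc w u - dotc w v.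
Proof. by rewrite dotcDr dotcNr. Qed.

Lemma dotc0l w : dotc 0 w = 0.
Proof. by rewrite -(scale0r (0 : 'cV[R]_m)) dotcZl mul0r. Qed.

Lemma dotc_ge0 u : 0 <= dotc u u.
Proof. by rewrite dotcE; apply: sumr_ge0 => i _; rewrite -expr2 sqr_ge0. Qed.

Lemma dotc_eq0 u : dotc u u = 0 -> u = 0.
Proof.
rewrite dotcE => /eqP; rewrite psumr_eq0 => [/allP u0|i _]; last by rewrite -expr2 sqr_ge0.
apply/matrixP => i j; rewrite ord1 mxE.
by have := u0 i (mem_index_enum _); rewrite -expr2 sqrf_eq0 => /eqP.
Qed.

Lemma dotc_gt0 u : u != 0 -> 0 < dotc u u.
Proof. by move=> u0; rewrite lt_def dotc_ge0 andbT; apply: contra_neq u0 => /dotc_eq0. Qed.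

Lemma enorm_sq u : enorm u ^+ 2 = dotc u u.
Proof. by rewrite /enorm sqr_sqrtr // dotc_ge0. Qed.

Lemma enorm_ge0 u : 0 <= enorm u.
Proof. by rewrite /enorm sqrtr_ge0. Qed.

Lemma dotc_expand t u v :
  dotc (u + t *: v) (u + t *: v) = dotc u u + 2 * t * dotc u v + t ^+ 2 * dotc v v.
Proof. rewrite !(dotcDl, dotcDr, dotcZl, dotcZr) (dotcC v u); ring. Qed.

Lemma dotc_young t u v : 0 < t -> 2 * dotc u v <= t * dotc u u + t^-1 * dotc v v.
Proof.
move=> t0; have := dotc_ge0 (t *: u - v).
rewrite !(dotcBl, dotcBr, dotcZl, dotcZr) (dotcC v u) => h.
rewrite -(ler_pM2l t0) mulrDr !mulrA mulfV ?gt_eqF // mul1r; nra.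
Qed.

Lemma dotcD_le u v : dotc (u + v) (u + v) <= 2 * dotc u u + 2 * dotc v v.
Proof.
have := dotc_young u v ltr01; rewrite invr1 !mul1r.
rewrite !(dotcDl, dotcDr) (dotcC v u); lra.
Qed.

Lemma dotcD3_le u v w :
  dotc (u + v + w) (u + v + w) <= 3 * dotc u u + 3 * dotc v v + 3 * dotc w w.
Proof.
have y (a b : 'cV[R]_m) := dotc_young a b ltr01; rewrite invr1 in y.
have := y u v; have := y u w; have := y v w.
rewrite !(dotcDl, dotcDr) (dotcC v u) (dotcC w u) (dotcC w v) !mul1r; lra.
Qed.

End InnerProduct.

Lemma dotc_mulmx (R : realType) (m k : nat) (M : 'M[R]_(m, k)) u v :
  dotc u (M *m v) = dotc (M^T *m u) v.
Proof. by rewrite /dotc trmx_mul trmxK mulmxA. Qed.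

Lemma quadratic_nonneg_disc (R : realType) (a b c : R) : 0 <= c ->
  (forall t, 0 <= a + 2 * t * b + t ^+ 2 * c) -> b ^+ 2 <= a * c.
Proof.
move=> c0 H; have [c_eq0|c_neq0] := eqVneq c 0; last first.
  have c_gt0 : 0 < c by rewrite lt_def c_neq0.
  have := H (- (b / c)); set t := b / c.
  have -> : b = t * c by rewrite divfK.
  nra.
rewrite c_eq0 mulr0; have [->|b0] := eqVneq b 0; first by rewrite expr0n.
have := H (- (a + 1) / (2 * b)); rewrite c_eq0 mulr0 addr0.
have -> : 2 * (- (a + 1) / (2 * b)) * b = - (a + 1) by field; rewrite b0.
lra.
Qed.

Section QuadraticForms.
Variables (R : realType) (m : nat).
Implicit Types (M N : 'M[R]_m) (u v w : 'cV[R]_m).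

Lemma dotc_cauchy_schwarz u v : `|dotc u v| <= enorm u * enorm v.
Proof.
have cs : dotc u v ^+ 2 <= dotc u u * dotc v v.
  apply: quadratic_nonneg_disc (dotc_ge0 v) _ => t.
  by rewrite -dotc_expand dotc_ge0.
by rewrite /enorm -sqrtrM ?dotc_ge0 // -sqrtr_sqr ler_sqrt // mulr_ge0 ?dotc_ge0.
Qed.

Lemma dotc_mulmx_bound M :
  exists2 c, 0 <= c & forall w, `|dotc w (M *m w)| <= c * dotc w w.
Proof.
exists (\sum_i \sum_j `|M i j|); first by apply: sumr_ge0 => i _; apply: sumr_ge0.
move=> w; have coord_le i : w i 0 ^+ 2 <= dotc w w.
  rewrite dotcE (bigD1 i) //= -expr2 lerDl.
  by apply: sumr_ge0 => j _; rewrite -expr2 sqr_ge0.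
have -> : dotc w (M *m w) = \sum_i \sum_j M i j * (w i 0 * w j 0).
  rewrite dotcE; apply: eq_bigr => i _; rewrite mxE mulr_sumr.
  by apply: eq_bigr => j _; ring.
apply: (le_trans (ler_norm_sum _ _ _)); rewrite mulr_suml; apply: ler_sum => i _.
apply: (le_trans (ler_norm_sum _ _ _)); rewrite mulr_suml; apply: ler_sum => j _.
rewrite normrM; apply: ler_wpM2l => //.
have := coord_le i; have := coord_le j; rewrite ler_norml; nra.
Qed.

Lemma psd_cauchy_schwarz N u w : N^T = N -> (forall v, 0 <= dotc v (N *m v)) ->
  dotc u (N *m w) ^+ 2 <= dotc u (N *m u) * dotc w (N *m w).
Proof.
move=> N_sym N_psd; apply: quadratic_nonneg_disc => // t.
have -> : dotc u (N *m u) + 2 * t * dotc u (N *m w) + t ^+ 2 * dotc w (N *m w)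
    = dotc (u + t *: w) (N *m (u + t *: w)).
  rewrite mulmxDr -scalemxAr !(dotcDl, dotcDr, dotcZl, dotcZr).
  by rewrite [dotc w (N *m u)]dotc_mulmx N_sym [dotc (N *m w) u]dotcC; ring.
exact: N_psd.
Qed.

Lemma psd_unitmx_coercive N : N^T = N -> (forall v, 0 <= dotc v (N *m v)) ->
  N \in unitmx -> exists2 K, 0 < K & forall v, dotc v v <= K * dotc v (N *m v).
Proof.
move=> N_sym N_psd N_unit; set P := invmx N.
have [cN cN_ge0 hcN] := dotc_mulmx_bound N.
have [cP cP_ge0 hcP] := dotc_mulmx_bound (P *m P^T).
have key v : dotc v v ^+ 2 <= cN * cP * dotc v v * dotc v (N *m v).
  have e : dotc v v = dotc (P^T *m v) (N *m v) by rewrite -dotc_mulmx mulKmx.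
  rewrite {1}e.
  apply: le_trans (psd_cauchy_schwarz _ _ N_sym N_psd) _.
  apply: ler_wpM2r; first exact: N_psd.
  have /ler_normlP[_ hN] := hcN (P^T *m v); apply: le_trans hN _.
  rewrite -mulrA; apply: ler_wpM2l => //.
  have -> : dotc (P^T *m v) (P^T *m v) = dotc v (P *m P^T *m v).
    by rewrite -mulmxA [RHS]dotc_mulmx.
  by have /ler_normlP[] := hcP v.
exists (cN * cP + 1) => [|v]; first by have := mulr_ge0 cN_ge0 cP_ge0; lra.
have := key v; have := N_psd v; have := mulr_ge0 cN_ge0 cP_ge0.
set x := dotc v v; set y := dotc v (N *m v); set K0 := cN * cP => K0_ge0 y_ge0 hk.
have [x_le|Ky_lt] := lerP x (K0 * y); first by have := mulr_ge0 K0_ge0 y_ge0; lra.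
have x_gt0 : 0 < x by have := mulr_ge0 K0_ge0 y_ge0; lra.
have : x * (K0 * y) < x * x by rewrite ltr_pM2l.
by rewrite -expr2 mulrCA mulrA; lra.
Qed.

(* mu is the infimum of the Rayleigh quotient; if M - mu I were invertible, its coercivity
   would make mu + 1/K a lower bound of the quotient too. *)
Lemma sym_min_eigenvalue M v0 : M^T = M -> v0 != 0 ->
  exists2 mu, eigenvalue M mu & forall v, mu * dotc v v <= dotc v (M *m v).
Proof.
move=> M_sym v0_neq0.
pose E := [set x : R | exists2 v, v != 0 & x = dotc v (M *m v) / dotc v v].
have [c _ hc] := dotc_mulmx_bound M.
have E_lb : has_lbound E.
  exists (- c) => _ [v /dotc_gt0 v_gt0 ->].
  by rewrite ler_pdivlMr // mulNr; have /ler_normlP[] := hc v; rewrite lerNl.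
have E_n0 : E !=set0 by exists (dotc v0 (M *m v0) / dotc v0 v0); exists v0.
set mu := inf E.
have mu_lb v : mu * dotc v v <= dotc v (M *m v).
  have [->|v_neq0] := eqVneq v 0; first by rewrite mulmx0 !dotc0l mulr0.
  by rewrite -ler_pdivlMr ?dotc_gt0 //; apply: ge_inf E_lb _ _; exists v.
pose N := M - mu%:M.
have QN v : dotc v (N *m v) = dotc v (M *m v) - mu * dotc v v.
  by rewrite /N mulmxBl mul_scalar_mx dotcBr dotcZr.
have N_sym : N^T = N by rewrite /N linearB /= tr_scalar_mx M_sym.
have N_psd v : 0 <= dotc v (N *m v) by rewrite QN subr_ge0.
exists mu => //.
have N_sing : N \notin unitmx.
  apply/negP => /(psd_unitmx_coercive N_sym N_psd) [K K_gt0 hK].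
  suff : mu + K^-1 <= mu by rewrite gerDl leNgt invr_gt0 K_gt0.
  apply: lb_le_inf E_n0 _ => _ [v /dotc_gt0 v_gt0 ->].
  have Ki_ge0 : 0 <= K^-1 by rewrite invr_ge0 ltW.
  have := ler_wpM2l Ki_ge0 (hK v).
  rewrite mulrA mulVf ?gt_eqF // mul1r QN ler_pdivlMr // mulrDl; lra.
move: N_sing; rewrite unitmxE unitfE negbK => /det0P[v v_neq0 vN].
apply/eigenvalueP; exists v => //.
by move: vN; rewrite /N mulmxBr mul_mx_scalar => /eqP; rewrite subr_eq0 => /eqP.
Qed.

Lemma eigenvalue_lb_dotc M lam : M^T = M -> (forall a, eigenvalue M a -> lam <= a) ->
  forall w, lam * dotc w w <= dotc w (M *m w).
Proof.
move=> M_sym lam_lb w.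
have [->|w_neq0] := eqVneq w 0; first by rewrite mulmx0 !dotc0l mulr0.
have [mu /lam_lb lam_mu mu_lb] := sym_min_eigenvalue M_sym w_neq0.
by apply: le_trans (mu_lb w); apply: ler_wpM2r lam_mu; exact: dotc_ge0.
Qed.

Lemma eigenvalue_nonzero_vector M a : eigenvalue M a -> exists w : 'cV[R]_m, w != 0.
Proof. by move=> /eigenvalueP[v _ v_neq0]; exists v^T; rewrite trmx_eq0. Qed.

End QuadraticForms.

Section GramMatrices.
Variables (R : realType) (n q : nat) (B : 'M[R]_(n, q)).

Lemma gram_sym : (B^T *m B)^T = B^T *m B.
Proof. by rewrite trmx_mul trmxK. Qed.

Lemma gram_dotc w : dotc w (B^T *m B *m w) = dotc (B *m w) (B *m w).
Proof. by rewrite -mulmxA dotc_mulmx trmxK. Qed.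

Lemma gram_min_eigenvalue_lb lam : (forall a, eigenvalue (B^T *m B) a -> lam <= a) ->
  forall w, lam * dotc w w <= dotc (B *m w) (B *m w).
Proof. by move=> lam_lb w; rewrite -gram_dotc; exact: eigenvalue_lb_dotc gram_sym lam_lb w. Qed.

Lemma gram_max_eigenvalue_ub lam : (forall a, eigenvalue (B^T *m B) a -> a <= lam) ->
  forall w, dotc (B *m w) (B *m w) <= lam * dotc w w.
Proof.
move=> lam_ub w; rewrite -lerN2 -mulNr -gram_dotc -dotcNr -mulNmx.
apply: eigenvalue_lb_dotc => [|a /eigenvalueP[v vM v_neq0]].
  by rewrite linearN /= gram_sym.
rewrite lerNl; apply: lam_ub; apply/eigenvalueP; exists v => //.
by rewrite scaleNr -vM mulmxN opprK.
Qed.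

Lemma gram_eigenvalue_gt0 lam : \rank B = q -> eigenvalue (B^T *m B) lam -> 0 < lam.
Proof.
move=> rkB /eigenvalueP[v vM v_neq0].
have Bv : dotc (B *m v^T) (B *m v^T) = lam * dotc v^T v^T.
  rewrite -gram_dotc.
  have -> : B^T *m B *m v^T = (v *m (B^T *m B))^T by rewrite trmx_mul gram_sym.
  by rewrite vM linearZ /= dotcZr.
have v_gt0 : 0 < dotc v^T v^T by rewrite dotc_gt0 ?trmx_eq0.
rewrite ltNge; apply/negP => lam_le0.
have /dotc_eq0/(congr1 trmx) : dotc (B *m v^T) (B *m v^T) = 0.
  by apply/eqP; rewrite eq_le dotc_ge0 andbT Bv; nra.
rewrite trmx_mul trmxK trmx0 => /eqP.
have rf : row_free B^T by rewrite /row_free mxrank_tr rkB.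
by rewrite (mulmx_free_eq0 _ rf) (negbTE v_neq0).
Qed.

Lemma gram_range_lb lam : 0 < lam -> (forall w, lam * dotc w w <= dotc (B *m w) (B *m w)) ->
  forall w, lam * dotc (B *m w) (B *m w) <= dotc (B^T *m (B *m w)) (B^T *m (B *m w)).
Proof.
move=> lam_gt0 hB w; set z := B^T *m (B *m w).
have e : dotc (B *m w) (B *m w) = dotc w z by rewrite dotc_mulmx dotcC.
have := dotc_young w z lam_gt0; have := hB w; rewrite -e => h1 h2.
have : dotc (B *m w) (B *m w) <= lam^-1 * dotc z z by lra.
by rewrite -ler_pdivlMl ?invr_gt0 // invrK.
Qed.

End GramMatrices.

Lemma dotc_le_of_sq_le (R : realType) (m : nat) (L : R) (a d : 'cV[R]_m) :
  0 <= L -> dotc a a <= L ^+ 2 * dotc d d -> dotc a d <= L * dotc d d.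
Proof.
move=> L_ge0 h; have [L0|L_neq0] := eqVneq L 0.
  move: h; rewrite L0 expr2 !mul0r => a_le0.
  have a0 : dotc a a = 0 by apply/eqP; rewrite eq_le a_le0 dotc_ge0.
  by rewrite (dotc_eq0 a0) dotc0l.
have L_gt0 : 0 < L by rewrite lt_def L_neq0.
have Li_gt0 : 0 < L^-1 by rewrite invr_gt0.
have := dotc_young a d Li_gt0; rewrite invrK.
have : L^-1 * dotc a a <= L * dotc d d by rewrite ler_pdivrMl // mulrA -expr2.
lra.
Qed.

Lemma gradient_eq0_of_min (R : realType) (m : nat) (G : 'cV[R]_m) (c : 'cV[R]_m -> R) :
  (forall t v, 0 <= t * dotc G v + t ^+ 2 * c v) -> G = 0.
Proof.
move=> H; apply: dotc_eq0; apply/eqP; rewrite eq_le dotc_ge0 andbT leNgt.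
apply/negP => G_gt0; set a := dotc G G in G_gt0.
set C := `|c G| + 1; have C_gt0 : 0 < C by rewrite ltr_pwDr.
set s := a / (2 * C); have s_gt0 : 0 < s by rewrite divr_gt0 // mulr_gt0.
have := H (- s) G; rewrite -/a mulNr sqrrN.
have sC : s * (2 * C) = a by rewrite divfK // mulf_neq0 // ?gt_eqF.
have : s ^+ 2 * c G <= s ^+ 2 * C.
  by apply: ler_wpM2l; [exact: sqr_ge0 | have := ler_norm (c G); rewrite /C; lra].
have : s ^+ 2 * C = s * a / 2 by rewrite -sC; field.
have := mulr_gt0 s_gt0 G_gt0; lra.
Qed.

Section LipschitzGradient.
Variables (R : realType) (m : nat) (L : R) (g : 'cV[R]_m -> R) (G : 'cV[R]_m -> 'cV[R]_m).
Hypothesis gL : lipschitz_differentiable L g G.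

Lemma lipschitz_ge0 : (exists w : 'cV[R]_m, w != 0) -> 0 <= L.
Proof.
move=> [w w_neq0]; have := gL.2 w 0; rewrite !subr0.
have w_gt0 : 0 < enorm w by rewrite /enorm sqrtr_gt0 dotc_gt0.
by move/(le_trans (enorm_ge0 _)); rewrite pmulr_lge0.
Qed.

Lemma lipschitz_dotc (x y : 'cV[R]_m) :
  dotc (G x - G y) (G x - G y) <= L ^+ 2 * dotc (x - y) (x - y).
Proof.
rewrite -!enorm_sq -exprMn !expr2.
by apply: ler_pM; rewrite ?enorm_ge0 //; exact: gL.2.
Qed.

Lemma lipschitz_grad_sq_le (x : 'cV[R]_m) :
  dotc (G x) (G x) <= 2 * (L ^+ 2 * dotc x x) + 2 * dotc (G 0) (G 0).
Proof.
have := dotcD_le (G x - G 0) (G 0); rewrite subrK.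
by have := lipschitz_dotc x 0; rewrite subr0; lra.
Qed.

Lemma is_derive_along (x d : 'cV[R]_m) (t : R) :
  is_derive t 1 (fun s : R => g (s *: d + x)) (dotc (G (t *: d + x)) d).
Proof.
set phi := fun s : R => g (s *: d + x).
have [dg dgE] := gL.1 (t *: d + x).
have e : (fun s : R => s^-1 *: ((phi \o shift t) (s *: (1 : R)) - phi t)) =
         (fun s : R => s^-1 *: ((g \o shift (t *: d + x)) (s *: d) - g (t *: d + x))).
  apply/funext => s; rewrite /phi /=; congr (_ *: (g _ - _)).
  by rewrite [s *: 1]mulr1 scalerDl addrA.
have dv : derivable g (t *: d + x) d by exact: diff_derivable.
split; first by rewrite /derivable e; exact: dv.
by rewrite /derive e -/(derive g _ d) deriveE // dgE.
Qed.

Hypothesis L_ge0 : 0 <= L.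

Lemma descent_lemma (x y : 'cV[R]_m) :
  g y <= g x + dotc (G x) (y - x) + L * dotc (y - x) (y - x).
Proof.
set d := y - x.
have cont : {within `[0, 1], continuous (fun s : R => g (s *: d + x))}.
  by apply: derivable_within_continuous => t _; have [] := is_derive_along x d t.
have [c c01] := MVT ltr01 (fun t _ => is_derive_along x d t) cont.
rewrite scale1r scale0r add0r subr0 mulr1 subrK => g_mvt.
have c2_le1 : c ^+ 2 <= 1.
  by move: c01; rewrite in_itv /= => /andP[c_ge0 c_le1]; rewrite expr_le1 // ltW.
have Gc : dotc (G (c *: d + x) - G x) (G (c *: d + x) - G x) <= L ^+ 2 * dotc d d.
  apply: le_trans (lipschitz_dotc _ _) _; rewrite addrK dotcZl dotcZr.
  have := mulr_ge0 (sqr_ge0 L) (dotc_ge0 d); rewrite expr2 in c2_le1 *; nra.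
have := dotc_le_of_sq_le L_ge0 Gc; rewrite dotcBl; lra.
Qed.

End LipschitzGradient.

Section LinearizedProx.
Variables (R : realType) (n q : nat) (B : 'M[R]_(n, q)) (a beta : R).
Variables (c z : 'cV[R]_n) (y0 d : 'cV[R]_q).

(* The y-subproblem of the algorithm, with c = gamma^k, z = A x^(k+1), y0 = y^k,
   d = grad h(y^k) and a = Ly. *)
Definition lin_prox (y : 'cV[R]_q) : R :=
  dotc c (B *m y) + a / 2 * enorm (y - y0) ^+ 2
  + beta / 2 * enorm (z + B *m y) ^+ 2 + dotc (y - y0) d.

Definition lin_prox_grad (y : 'cV[R]_q) : 'cV[R]_q :=
  B^T *m (c + beta *: (z + B *m y)) + a *: (y - y0) + d.

Lemma lin_prox_expand y t v :
  lin_prox (y + t *: v) = lin_prox y + t * dotc (lin_prox_grad y) v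
    + t ^+ 2 * (a / 2 * dotc v v + beta / 2 * dotc (B *m v) (B *m v)).
Proof.
rewrite /lin_prox /lin_prox_grad !enorm_sq.
have -> : y + t *: v - y0 = (y - y0) + t *: v by rewrite addrAC.
have -> : z + B *m (y + t *: v) = (z + B *m y) + t *: (B *m v).
  by rewrite mulmxDr -scalemxAr addrA.
rewrite !dotc_expand mulmxDr -scalemxAr !(dotcDl, dotcDr, dotcZl, dotcZr) -dotc_mulmx.
by rewrite (dotcC v d) !(dotcDl, dotcZl); lra.
Qed.

Lemma lin_prox_grad_eq0 y : (forall y', lin_prox y <= lin_prox y') -> lin_prox_grad y = 0.
Proof.
move=> y_min.
apply: (gradient_eq0_of_min (c := fun v => a / 2 * dotc v v + beta / 2 * dotc (B *m v) (B *m v))).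
by move=> t v; have := y_min (y + t *: v); rewrite lin_prox_expand; lra.
Qed.

Lemma lin_prox_center y : (forall y', lin_prox y <= lin_prox y') ->
  lin_prox y0 = lin_prox y + a / 2 * dotc (y - y0) (y - y0)
                + beta / 2 * dotc (B *m (y - y0)) (B *m (y - y0)).
Proof.
move=> y_min; have := lin_prox_expand y (-1) (y - y0).
rewrite scaleN1r opprB addrC subrK lin_prox_grad_eq0 // dotc0l => ->.
by rewrite sqrrN expr1n mul1r mulr0 addr0 addrA.
Qed.

End LinearizedProx.

Lemma cvg_seq_ub (R : realType) (u : nat -> R) (l : R) :
  u @ \oo --> l -> exists M, forall k, u k <= M.
Proof.
have PF : ProperFilter (globally [set: nat]) by exact: (globally_properfilter (a := 0%N)).
move=> /cvgP/cvg_seq_bounded/ex_bound[M uM].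
by exists M => k; exact: le_trans (ler_norm _) (uM k I).
Qed.

Lemma dotc_bounded_cvg0 (R : realType) (m : nat) (a b : nat -> 'cV[R]_m) (M : R) :
  (forall k, dotc (a k) (a k) <= M) -> (fun k => dotc (b k) (b k)) @ \oo --> 0 ->
  (fun k => dotc (a k) (b k)) @ \oo --> 0.
Proof.
move=> a_bd b_cvg0.
have nb_cvg0 : (fun k => Num.sqrt M * enorm (b k)) @ \oo --> 0.
  rewrite -(mulr0 (Num.sqrt M)); apply: cvgM; first exact: cvg_cst.
  by rewrite -sqrtr0; exact: (cvg_comp _ _ b_cvg0 (@sqrt_continuous R 0)).
apply: (@squeeze_cvgr _ _ _ _ (fun k => - (Num.sqrt M * enorm (b k)))
  (fun k => Num.sqrt M * enorm (b k))); last exact: nb_cvg0.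
- apply: nearW => k; rewrite -ler_norml; apply: le_trans (dotc_cauchy_schwarz _ _) _.
  by apply: ler_wpM2r; [exact: enorm_ge0 | exact: ler_wsqrtr].
- by rewrite -oppr0; exact: cvgN nb_cvg0.
Qed.

Section LinearizedADMM.
Variables (R : realType) (n p q : nat) (A : 'M[R]_(n, p)) (B : 'M[R]_(n, q)).
Variables (f g : 'cV[R]_p -> R) (h : 'cV[R]_q -> R).
Variables (gradg : 'cV[R]_p -> 'cV[R]_p) (gradh : 'cV[R]_q -> 'cV[R]_q).
Variables (Lg Lh Lx Ly beta LA lamB : R).
Variables (xs : nat -> 'cV[R]_p) (ys : nat -> 'cV[R]_q) (gs : nat -> 'cV[R]_n).

Hypothesis g_lip : lipschitz_differentiable Lg g gradg.
Hypothesis h_lip : lipschitz_differentiable Lh h gradh.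
Hypotheses (Lg_ge0 : 0 <= Lg) (Lh_ge0 : 0 <= Lh) (beta_gt0 : 0 < beta) (lamB_gt0 : 0 < lamB).
Hypothesis A_ub : forall w, dotc (A *m w) (A *m w) <= LA * dotc w w.
Hypothesis B_lb : forall w, lamB * dotc w w <= dotc (B *m w) (B *m w).

Hypothesis x_step : forall k x,
  f (xs k.+1) + dotc (gs k) (A *m xs k.+1)
    + Lx / 2 * enorm (xs k.+1 - xs k) ^+ 2
    + dotc (xs k.+1 - xs k) (gradg (xs k) + beta *: (A^T *m (A *m xs k + B *m ys k)))
  <=
  f x + dotc (gs k) (A *m x)
    + Lx / 2 * enorm (x - xs k) ^+ 2
    + dotc (x - xs k) (gradg (xs k) + beta *: (A^T *m (A *m xs k + B *m ys k))).
Hypothesis y_step : forall k y,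
  lin_prox B Ly beta (gs k) (A *m xs k.+1) (ys k) (gradh (ys k)) (ys k.+1)
  <= lin_prox B Ly beta (gs k) (A *m xs k.+1) (ys k) (gradh (ys k)) y.
Hypothesis dual_step : forall k, gs k.+1 = gs k + beta *: (A *m xs k.+1 + B *m ys k.+1).

Local Notation s := (beta * lamB).
Local Notation kappa := (3 * (Lh ^+ 2 + Ly ^+ 2) / (beta * lamB)).

Hypothesis Lx_large : 2 * Lg + beta * LA <= Lx.
Hypothesis Lh_small : 3 * Lh <= s.
Hypothesis psi_margin : 3 * Ly ^+ 2 / s + kappa + 1 <= Ly - Lh + s / 2.

Let res k := A *m xs k + B *m ys k.
Let dy k := dotc (ys k.+1 - ys k) (ys k.+1 - ys k).
Let Lbeta x y z := g x + f x + h y + dotc z (A *m x + B *m y)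
  + beta / 2 * dotc (A *m x + B *m y) (A *m x + B *m y).
Let lag k := Lbeta (xs k) (ys k) (gs k).

Lemma beta_lamB_gt0 : 0 < s. Proof. exact: mulr_gt0. Qed.

Lemma Lbeta_x_step k : Lbeta (xs k.+1) (ys k) (gs k) <= lag k.
Proof.
have := x_step k (xs k); rewrite subrr !enorm_sq !dotc0l.
set d := xs k.+1 - xs k.
rewrite dotcDr dotcZr [dotc d (A^T *m _)]dotc_mulmx trmxK (dotcC d (gradg _)).
have e : dotc (gs k) (A *m d) = dotc (gs k) (A *m xs k.+1) - dotc (gs k) (A *m xs k).
  by rewrite /d mulmxBr dotcBr.
have := descent_lemma g_lip Lg_ge0 (xs k) (xs k.+1); rewrite -/d.
have : beta / 2 * dotc (A *m d) (A *m d) <= beta / 2 * (LA * dotc d d).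
  by apply: ler_wpM2l; [rewrite divr_ge0 // ltW | exact: A_ub].
have : 0 <= (Lx / 2 - Lg - beta * LA / 2) * dotc d d.
  by apply: mulr_ge0; [have := Lx_large; lra | exact: dotc_ge0].
rewrite /lag /Lbeta /=; set r := A *m xs k + B *m ys k.
have -> : A *m xs k.+1 + B *m ys k = r + A *m d.
  by rewrite /d /r mulmxBr [RHS]addrC addrA subrK.
rewrite (dotcDl r (A *m d)) !(dotcDr r (A *m d)) e (dotcC (A *m d) r); lra.
Qed.

Lemma Lbeta_y_step k :
  Lbeta (xs k.+1) (ys k.+1) (gs k) + (Ly - Lh + s / 2) * dy k <= Lbeta (xs k.+1) (ys k) (gs k).
Proof.
have := lin_prox_center (y_step k); rewrite /lin_prox !enorm_sq subrr !dotc0l.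
have := descent_lemma h_lip Lh_ge0 (ys k) (ys k.+1).
have : beta / 2 * (lamB * dy k)
    <= beta / 2 * dotc (B *m (ys k.+1 - ys k)) (B *m (ys k.+1 - ys k)).
  by apply: ler_wpM2l; [rewrite divr_ge0 // ltW | exact: B_lb].
rewrite /Lbeta /dy !(dotcDr _ _ (gs k)) (dotcC (ys k.+1 - ys k) (gradh (ys k))); lra.
Qed.

Lemma lag_dual_step k :
  lag k.+1 = Lbeta (xs k.+1) (ys k.+1) (gs k) + beta * dotc (res k.+1) (res k.+1).
Proof. by rewrite /lag /Lbeta /res dual_step dotcDl dotcZl; lra. Qed.

Lemma lag_step k :
  lag k.+1 + (Ly - Lh + s / 2) * dy k <= lag k + beta * dotc (res k.+1) (res k.+1).
Proof. by rewrite lag_dual_step; have := Lbeta_x_step k; have := Lbeta_y_step k; lra. Qed.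

Lemma y_step_optimality k : B^T *m gs k.+1 = - (gradh (ys k) + Ly *: (ys k.+1 - ys k)).
Proof.
have /eqP := lin_prox_grad_eq0 (y_step k).
by rewrite /lin_prox_grad -dual_step -addrA addr_eq0 (addrC (Ly *: _)) => /eqP.
Qed.

(* (xs k, - zeta k) is feasible: the lower bound and the coercivity, which only hold on the
   feasible set, are applied there. *)
Variable zeta : nat -> 'cV[R]_q.
Hypothesis A_range : forall k, A *m xs k = B *m zeta k.

Let w k := zeta k + ys k.

Lemma res_range k : res k = B *m w k.
Proof. by rewrite /res /w mulmxDr A_range. Qed.

Lemma dual_res_dotc k : dotc (gs k.+1) (res k.+1)
  = - dotc (gradh (ys k)) (w k.+1) - Ly * dotc (ys k.+1 - ys k) (w k.+1).
Proof. by rewrite res_range dotc_mulmx y_step_optimality dotcNl dotcDl dotcZl opprD. Qed.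

Lemma res_bound k : s * (beta * dotc (res k.+2) (res k.+2))
  <= 3 * Lh ^+ 2 * dy k + 3 * Ly ^+ 2 * dy k.+1 + 3 * Ly ^+ 2 * dy k.
Proof.
have dual : beta *: (B^T *m res k.+2) = - (gradh (ys k.+1) - gradh (ys k))
    - Ly *: (ys k.+2 - ys k.+1) + Ly *: (ys k.+1 - ys k).
  have := congr1 (mulmx B^T) (dual_step k.+1).
  rewrite mulmxDr -scalemxAr !y_step_optimality => e.
  have -> : beta *: (B^T *m res k.+2) = (gradh (ys k) + Ly *: (ys k.+1 - ys k))
      - (gradh (ys k.+1) + Ly *: (ys k.+2 - ys k.+1)) by rewrite e addrA subrr add0r.
  by apply/matrixP => i j; rewrite !mxE; ring.
have := dotcD3_le (- (gradh (ys k.+1) - gradh (ys k)))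
  (- (Ly *: (ys k.+2 - ys k.+1))) (Ly *: (ys k.+1 - ys k)).
rewrite -dual !(dotcNl, dotcNr, opprK, dotcZl, dotcZr).
have := lipschitz_dotc h_lip (ys k.+1) (ys k).
have := gram_range_lb lamB_gt0 B_lb (w k.+2); rewrite -res_range => gram.
have : beta ^+ 2 * (lamB * dotc (res k.+2) (res k.+2))
    <= beta ^+ 2 * dotc (B^T *m res k.+2) (B^T *m res k.+2).
  by apply: ler_wpM2l; [exact: sqr_ge0 | exact: gram].
rewrite /dy; nra.
Qed.

(* The kappa term pays for the dual ascent beta |res k.+2|^2 bounded in res_bound. *)
Let psi k := lag k.+1 + kappa * dy k.

Lemma psi_step k : psi k.+1 + dy k.+1 <= psi k.
Proof.
have r_le : beta * dotc (res k.+2) (res k.+2) <= kappa * dy k + 3 * Ly ^+ 2 / s * dy k.+1.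
  rewrite -(ler_pM2l beta_lamB_gt0) mulrDr.
  have -> : s * (kappa * dy k) = 3 * (Lh ^+ 2 + Ly ^+ 2) * dy k.
    by field; rewrite !gt_eqF.
  have -> : s * (3 * Ly ^+ 2 / s * dy k.+1) = 3 * Ly ^+ 2 * dy k.+1.
    by field; rewrite !gt_eqF.
  by have := res_bound k; lra.
have : (3 * Ly ^+ 2 / s + kappa - (Ly - Lh + s / 2)) * dy k.+1 <= -1 * dy k.+1.
  by apply: ler_wpM2r; [exact: dotc_ge0 | have := psi_margin; lra].
by rewrite /psi; have := lag_step k.+1; lra.
Qed.

Lemma feasible_obj_le_psi k : g (xs k.+1) + f (xs k.+1) + h (- zeta k.+1) <= psi k.
Proof.
have := descent_lemma h_lip Lh_ge0 (ys k.+1) (- zeta k.+1).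
rewrite (_ : - zeta k.+1 - ys k.+1 = - w k.+1); last by rewrite /w opprD.
rewrite dotcNr dotcNl dotcNr opprK.
set e := gradh (ys k.+1) - gradh (ys k) - Ly *: (ys k.+1 - ys k).
have e_w : dotc e (w k.+1) = dotc (gradh (ys k.+1)) (w k.+1)
    - dotc (gradh (ys k)) (w k.+1) - Ly * dotc (ys k.+1 - ys k) (w k.+1).
  by rewrite /e (dotcBl (gradh (ys k.+1) - gradh (ys k))) dotcBl dotcZl.
have t_gt0 : 0 < 3 / s by rewrite divr_gt0 ?beta_lamB_gt0.
have := dotc_young (- e) (w k.+1) t_gt0; rewrite dotcNl dotcNr dotcNl opprK invf_div.
have e_le : 3 / s * dotc e e <= 2 * kappa * dy k.
  have e_le : dotc e e <= 2 * Lh ^+ 2 * dy k + 2 * Ly ^+ 2 * dy k.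
    have := dotcD_le (gradh (ys k.+1) - gradh (ys k)) (- (Ly *: (ys k.+1 - ys k))).
    rewrite -/e dotcNl dotcNr opprK !dotcZl !dotcZr.
    by have := lipschitz_dotc h_lip (ys k.+1) (ys k); rewrite /dy; lra.
  have -> : 2 * kappa * dy k = 3 / s * (2 * Lh ^+ 2 * dy k + 2 * Ly ^+ 2 * dy k).
    by field; rewrite !gt_eqF.
  by apply: ler_wpM2l e_le; exact: ltW.
have : beta / 2 * (lamB * dotc (w k.+1) (w k.+1)) <= beta / 2 * dotc (res k.+1) (res k.+1).
  by rewrite res_range; apply: ler_wpM2l; [rewrite divr_ge0 // ltW | exact: B_lb].
have : 0 <= (s / 3 - Lh) * dotc (w k.+1) (w k.+1).
  by apply: mulr_ge0; [have := Lh_small; lra | exact: dotc_ge0].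
by rewrite /psi /lag /Lbeta -/(res k.+1) dual_res_dotc; lra.
Qed.

Variable lb : R.
Hypothesis obj_lb : forall x y, A *m x + B *m y = 0 -> lb <= g x + f x + h y.
Hypothesis obj_coercive : forall (u : nat -> 'cV[R]_p) (v : nat -> 'cV[R]_q),
  (forall k, A *m u k + B *m v k = 0) ->
  (fun k => enorm (v k)) @ \oo --> +oo ->
  (fun k => g (u k) + f (u k) + h (v k)) @ \oo --> +oo.

Lemma feasible_zeta k : A *m xs k + B *m (- zeta k) = 0.
Proof. by rewrite mulmxN A_range subrr. Qed.

Lemma psi_ge_lb k : lb <= psi k.
Proof. exact: le_trans (obj_lb (feasible_zeta k.+1)) (feasible_obj_le_psi k). Qed.

Lemma psi_nonincreasing : nonincreasing_seq psi.
Proof.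
apply/nonincreasing_seqP => k; have := psi_step k.
by have := dotc_ge0 (ys k.+2 - ys k.+1); rewrite /dy; lra.
Qed.

Let psi_lim := inf (psi @` setT).

Lemma psi_cvg : psi @ \oo --> psi_lim.
Proof.
apply: nonincreasing_cvgn psi_nonincreasing _.
by exists lb => _ [k _ <-]; exact: psi_ge_lb.
Qed.

Lemma dy_cvg0 : dy @ \oo --> 0.
Proof.
rewrite -cvg_shiftS.
apply: (@squeeze_cvgr _ _ _ _ (fun=> 0) (fun k => psi k - psi k.+1)).
- by apply: nearW => k /=; rewrite dotc_ge0 /=; have := psi_step k; lra.
- exact: cvg_cst.
- by rewrite -(subrr psi_lim); apply: cvgB psi_cvg _; rewrite cvg_shiftS; exact: psi_cvg.
Qed.

Lemma res_cvg0 : (fun k => dotc (res k.+2) (res k.+2)) @ \oo --> 0.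
Proof.
have dy1 : (fun k => dy k.+1) @ \oo --> 0 by rewrite cvg_shiftS; exact: dy_cvg0.
have ub_cvg0 : (fun k => (s * beta)^-1 * (3 * Lh ^+ 2 * dy k + 3 * Ly ^+ 2 * dy k.+1
    + 3 * Ly ^+ 2 * dy k)) @ \oo --> (s * beta)^-1 * (3 * Lh ^+ 2 * 0 + 3 * Ly ^+ 2 * 0
    + 3 * Ly ^+ 2 * 0).
  apply: cvgM; first exact: cvg_cst.
  apply: cvgD; first apply: cvgD.
  - exact: cvgM (cvg_cst _) dy_cvg0.
  - exact: cvgM (cvg_cst _) dy1.
  - exact: cvgM (cvg_cst _) dy_cvg0.
rewrite !mulr0 !addr0 mulr0 in ub_cvg0.
apply: (@squeeze_cvgr _ _ _ _ (fun=> 0) _ _ _ _ (cvg_cst 0) ub_cvg0).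
apply: nearW => k /=; rewrite dotc_ge0 /=.
have sb_gt0 : 0 < s * beta by rewrite mulr_gt0 ?beta_lamB_gt0.
rewrite -(ler_pM2l sb_gt0) mulrA mulfV ?gt_eqF // mul1r.
by have := res_bound k; lra.
Qed.

Lemma w_cvg0 : (fun k => dotc (w k.+2) (w k.+2)) @ \oo --> 0.
Proof.
have ub_cvg0 : (fun k => lamB^-1 * dotc (res k.+2) (res k.+2)) @ \oo --> lamB^-1 * 0.
  by apply: cvgM; [exact: cvg_cst | exact: res_cvg0].
rewrite mulr0 in ub_cvg0.
apply: (@squeeze_cvgr _ _ _ _ (fun=> 0) _ _ _ _ (cvg_cst 0) ub_cvg0).
apply: nearW => k /=; rewrite dotc_ge0 /=.
by rewrite -(ler_pM2l lamB_gt0) mulrA mulfV ?gt_eqF // mul1r res_range B_lb.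
Qed.

Lemma zeta_bounded : exists M, forall k, dotc (zeta k.+1) (zeta k.+1) <= M.
Proof.
apply: contrapT => zeta_unbd.
have big j : exists k, (j%:R : R) ^+ 2 < dotc (zeta k.+1) (zeta k.+1).
  apply: contrapT => /forallNP j_bd; apply: zeta_unbd; exists (j%:R ^+ 2) => k.
  by rewrite leNgt; apply/negP; exact: j_bd.
have [sub sub_big] := choice big.
have zeta_div : (fun j => enorm (- zeta (sub j).+1)) @ \oo --> +oo.
  apply/cvgryPge => M; exists (Num.truncn M).+1 => // j /= jM.
  have M_lt := truncnS_gt M.
  have : ((Num.truncn M).+1%:R : R) <= j%:R by rewrite ler_nat.
  suff : (j%:R : R) <= enorm (- zeta (sub j).+1) by lra.
  rewrite /enorm dotcNl dotcNr opprK.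
  rewrite -[X in X <= _](@normr_nat R) -sqrtr_sqr ler_sqrt ?dotc_ge0 //.
  exact: ltW (sub_big j).
have := obj_coercive (fun j => feasible_zeta (sub j).+1) zeta_div.
move=> /cvgryPge/(_ (psi 0 + 1)) [N _ /(_ N (leqnn N))] /=.
have := feasible_obj_le_psi (sub N).
by have := psi_nonincreasing (leq0n (sub N)); lra.
Qed.

Lemma ys_bounded : exists M, forall k, dotc (ys k.+1) (ys k.+1) <= M.
Proof.
have [Mw Mw_ub] := cvg_seq_ub w_cvg0.
have [Mz Mz_ub] := zeta_bounded.
have [Md Md_ub] := cvg_seq_ub dy_cvg0.
exists (2 * (2 * Mw + 2 * Mz) + 2 * Md) => k.
have := dotcD_le (ys k.+2) (- (ys k.+2 - ys k.+1)).
rewrite (_ : ys k.+2 + - _ = ys k.+1); last by rewrite opprB addrC subrK.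
rewrite dotcNl dotcNr opprK.
have := dotcD_le (w k.+2) (- zeta k.+2).
rewrite (_ : w k.+2 + - _ = ys k.+2); last by rewrite /w addrC addKr.
rewrite dotcNl dotcNr opprK.
by have := Mw_ub k; have := Mz_ub k.+1; have := Md_ub k.+1; rewrite /w /dy; lra.
Qed.

Lemma obj_eq_psi k : g (xs k.+2) + f (xs k.+2) + h (ys k.+2)
  = psi k.+1 - kappa * dy k.+1 + dotc (gradh (ys k.+1)) (w k.+2)
    + Ly * dotc (ys k.+2 - ys k.+1) (w k.+2) - beta / 2 * dotc (res k.+2) (res k.+2).
Proof.
by rewrite /psi /lag /Lbeta -/(res k.+2) dual_res_dotc; lra.
Qed.

Lemma linearized_admm_obj_cvg : cvg ((fun k => g (xs k) + f (xs k) + h (ys k)) @ \oo).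
Proof.
have [My My_ub] := ys_bounded.
have [Md Md_ub] := cvg_seq_ub dy_cvg0.
have gradh_ub k : dotc (gradh (ys k.+1)) (gradh (ys k.+1))
    <= 2 * (Lh ^+ 2 * My) + 2 * dotc (gradh 0) (gradh 0).
  apply: le_trans (lipschitz_grad_sq_le h_lip _) _.
  by have := ler_wpM2l (sqr_ge0 Lh) (My_ub k); lra.
have psi1 : (fun k => psi k.+1) @ \oo --> psi_lim by rewrite cvg_shiftS; exact: psi_cvg.
have dy1 : (fun k => dy k.+1) @ \oo --> 0 by rewrite cvg_shiftS; exact: dy_cvg0.
have T3 := dotc_bounded_cvg0 gradh_ub w_cvg0.
have T4 := dotc_bounded_cvg0 (a := fun k => ys k.+2 - ys k.+1) (fun k => Md_ub k.+1) w_cvg0.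
apply/cvg_ex; exists psi_lim; rewrite -2!cvg_shiftS (eq_cvg _ _ obj_eq_psi).
suff : (fun k => psi k.+1 - kappa * dy k.+1 + dotc (gradh (ys k.+1)) (w k.+2)
    + Ly * dotc (ys k.+2 - ys k.+1) (w k.+2) - beta / 2 * dotc (res k.+2) (res k.+2))
    @ \oo --> psi_lim - kappa * 0 + 0 + Ly * 0 - beta / 2 * 0.
  by rewrite !mulr0 !subr0 !addr0.
apply: cvgB; first apply: cvgD; first apply: cvgD; first apply: cvgB.
- exact: psi1.
- exact: cvgM (cvg_cst _) dy1.
- exact: T3.
- exact: cvgM (cvg_cst _) T4.
- exact: cvgM (cvg_cst _) res_cvg0.
Qed.

End LinearizedADMM.

Lemma admm_parameter_conditions (R : realType) (Lg Lh Lx Ly beta LA lamB : R) :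
  0 <= Lg -> 0 <= Lh -> 0 < lamB ->
  let Lw := Lg + Lh in
  let Cm := (Ly + Lw ^+ 2) / 2 in
  Lg + beta * LA + 6 * Lw ^+ 2 + 1 <= Lx ->
  Lw + Lw ^+ 2 + 3 <= Ly ->
  Num.max (Num.max ((Lw + Ly + 2) / lamB)
                   (3 * (Lw ^+ 2 + Ly ^+ 2) / (lamB * Cm)))
          (3 * Ly ^+ 2 / lamB) <= beta ->
  [/\ 2 * Lg + beta * LA <= Lx, 3 * Lh <= beta * lamB &
      3 * Ly ^+ 2 / (beta * lamB) + 3 * (Lh ^+ 2 + Ly ^+ 2) / (beta * lamB) + 1
        <= Ly - Lh + beta * lamB / 2].
Proof.
move=> Lg_ge0 Lh_ge0 lamB_gt0 Lw Cm hLx hLy.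
rewrite !ge_max => /andP[/andP[hb1 hb2] hb3].
have Lw_ge0 : 0 <= Lw by rewrite addr_ge0.
have Lw2_ge0 := sqr_ge0 Lw.
have Cm_gt0 : 0 < Cm by rewrite /Cm; lra.
have s1 : 3 * Ly ^+ 2 <= beta * lamB by rewrite -ler_pdivrMr.
have s2 : 3 * (Lw ^+ 2 + Ly ^+ 2) <= beta * lamB * Cm.
  by rewrite -mulrA -ler_pdivrMr // mulr_gt0.
have s3 : Lw + Ly + 2 <= beta * lamB by rewrite -ler_pdivrMr.
have beta_lamB_gt0 : 0 < beta * lamB by nra.
have Lg_le : Lg <= Lw by rewrite /Lw lerDl.
have Lh_le : Lh <= Lw by rewrite /Lw lerDr.
split.
- have : Lw <= 6 * Lw ^+ 2 + 1 by have := sqr_ge0 (Lw - 1); rewrite sqrrB1; lra.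
  lra.
- nra.
have t1 : 3 * Ly ^+ 2 / (beta * lamB) <= 1 by rewrite ler_pdivrMr // mul1r.
have t2 : 3 * (Lh ^+ 2 + Ly ^+ 2) / (beta * lamB) <= Cm.
  have : Lh ^+ 2 <= Lw ^+ 2 by rewrite ler_sqr // nnegrE.
  by rewrite ler_pdivrMr // [Cm * _]mulrC; lra.
rewrite /Cm in t2; nra.
Qed.

Unset Implicit Arguments.

Theorem corollary2 (R : realType) (n p q : nat)
  (A : 'M[R]_(n, p)) (B : 'M[R]_(n, q))
  (f g : 'cV[R]_p -> R) (h : 'cV[R]_q -> R)
  (gradg : 'cV[R]_p -> 'cV[R]_p) (gradh : 'cV[R]_q -> 'cV[R]_q)
  (Lg Lh Lx Ly beta LA lamB : R)
  (xs : nat -> 'cV[R]_p) (ys : nat -> 'cV[R]_q) (gs : nat -> 'cV[R]_n) :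
  (* (i), (ii) *)
  lipschitz_differentiable Lh h gradh ->
  lipschitz_differentiable Lg g gradg ->
  (* (iii) lower bounded and coercive in y on the feasible set *)
  (exists lb : R, forall x y, A *m x + B *m y = 0 -> lb <= g x + f x + h y) ->
  (forall (u : nat -> 'cV[R]_p) (v : nat -> 'cV[R]_q),
      (forall k, A *m u k + B *m v k = 0) ->
      (fun k => enorm (v k)) @ \oo --> +oo ->
      (fun k => g (u k) + f (u k) + h (v k)) @ \oo --> +oo) ->
  (* (iv) *)
  \rank B = q ->
  (forall x : 'cV[R]_p, exists y : 'cV[R]_q, A *m x = B *m y) ->
  (* L_A = largest eigenvalue of A^T A, lamB = smallest eigenvalue of B^T B *)
  eigenvalue (A^T *m A) LA ->
  (forall a, eigenvalue (A^T *m A) a -> a <= LA) ->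
  eigenvalue (B^T *m B) lamB ->
  (forall a, eigenvalue (B^T *m B) a -> lamB <= a) ->
  (* parameters *)
  0 < Lx -> 0 < Ly -> 0 < beta ->
  let Lw := Lg + Lh in
  let Cm := (Ly + Lw ^+ 2) / 2 in
  Lg + beta * LA + 6 * Lw ^+ 2 + 1 <= Lx ->
  Lw + Lw ^+ 2 + 3 <= Ly ->
  Num.max (Num.max ((Lw + Ly + 2) / lamB)
                   (3 * (Lw ^+ 2 + Ly ^+ 2) / (lamB * Cm)))
          (3 * Ly ^+ 2 / lamB) <= beta ->
  (* the two-block linearized ADMM iteration *)
  (forall k x,
      f (xs k.+1) + dotc (gs k) (A *m xs k.+1)
        + Lx / 2 * enorm (xs k.+1 - xs k) ^+ 2
        + dotc (xs k.+1 - xs k)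
               (gradg (xs k) + beta *: (A^T *m (A *m xs k + B *m ys k)))
      <=
      f x + dotc (gs k) (A *m x)
        + Lx / 2 * enorm (x - xs k) ^+ 2
        + dotc (x - xs k)
               (gradg (xs k) + beta *: (A^T *m (A *m xs k + B *m ys k)))) ->
  (forall k y,
      dotc (gs k) (B *m ys k.+1) + Ly / 2 * enorm (ys k.+1 - ys k) ^+ 2
        + beta / 2 * enorm (A *m xs k.+1 + B *m ys k.+1) ^+ 2
        + dotc (ys k.+1 - ys k) (gradh (ys k))
      <=
      dotc (gs k) (B *m y) + Ly / 2 * enorm (y - ys k) ^+ 2
        + beta / 2 * enorm (A *m xs k.+1 + B *m y) ^+ 2
        + dotc (y - ys k) (gradh (ys k))) ->
  (forall k, gs k.+1 = gs k + beta *: (A *m xs k.+1 + B *m ys k.+1)) ->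
  cvg ((fun k => g (xs k) + f (xs k) + h (ys k)) @ \oo).
Proof.
move=> h_lip g_lip [lb obj_lb] obj_coercive rkB A_range eigA maxA eigB minB _ _ beta_gt0
  Lw Cm hLx hLy hbeta x_step y_step dual_step.
have Lg_ge0 := lipschitz_ge0 g_lip (eigenvalue_nonzero_vector eigA).
have Lh_ge0 := lipschitz_ge0 h_lip (eigenvalue_nonzero_vector eigB).
have lamB_gt0 := gram_eigenvalue_gt0 rkB eigB.
have A_ub := gram_max_eigenvalue_ub maxA.
have B_lb := gram_min_eigenvalue_lb minB.
have [Lx_large Lh_small psi_margin] :=
  admm_parameter_conditions Lg_ge0 Lh_ge0 lamB_gt0 hLx hLy hbeta.
have [zeta A_zeta] := choice (fun k => A_range (xs k)).
exact: (linearized_admm_obj_cvg g_lip h_lip Lg_ge0 Lh_ge0 beta_gt0 lamB_gt0 A_ub B_lb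
  x_step y_step dual_step Lx_large Lh_small psi_margin A_zeta obj_lb obj_coercive).
Qed.
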